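(* Let $\Omega$ be a finite set, $K\ge1$, let $q$ be a probability distribution on $\Omega$ and let $p(x_1,\ldots,x_K)$ be a probability distribution on $\Omega^K$. Let $(X_1,\ldots,X_K)\sim p$ and $\mathcal{S}=\{X_1,\ldots,X_K\}$. Let $P^\star(\mathrm{acc})$ denote the supremum of $\Pr(Z\in\mathcal{S})$ over all valid token-level selection rules with output $Z$. Then $$P^\star(\mathrm{acc})=\max_{\{\beta_y(x_{1:K})\}}\ \sum_{y\in\Omega}\min\Big(q(y),\ \sum_{x_1,\ldots,x_K\in\Omega}\beta_y(x_{1:K})\,p(x_{1:K})\Big),$$ where the maximum is over all families $\beta_y(x_{1:K})$, $y\in\Omega$, $x_{1:K}\in\Omega^K$, with $0\le\beta_y(x_{1:K})\le1$, $\sum_{y\in\Omega}\beta_y(x_{1:K})=1$ for every $x_{1:K}\in\Omega^K$, and $\beta_y(x_{1:K})=0$ whenever $y\notin\{x_1,\ldots,x_K\}$. Moreover, if $\{\beta^\star_y(x_{1:K})\}$ attains the maximum, then $P^\star(\mathrm{acc})$ is attained by the two-step rule: first output an intermediate token $Y$ with $\Pr(Y=y\mid X_{1:K}=x_{1:K})=\beta^\star_y(x_{1:K})$; then apply single-draft speculative sampling to $Y$ with target $q$ to produce $Z$.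
   Context: A token-level selection rule is a conditional distribution $\mathcal{P}(\cdot\mid X_{1:K})$ on $\Omega$; it is valid if its output $Z$ satisfies $\Pr(Z=z)=\sum_{x_{1:K}}\mathcal{P}(z\mid x_{1:K})p(x_{1:K})=q(z)$ for all $z\in\Omega$. Single-draft speculative sampling of a token $Y$ with distribution $p_I$ against target $q$: with probability $\min(1,q(Y)/p_I(Y))$ output $Z=Y$; otherwise output $Z$ drawn from $p^{\mathrm{res}}(x)=\frac{q(x)-\min(p_I(x),q(x))}{1-\sum_{x'}\min(p_I(x'),q(x'))}$. Its output has distribution $q$. *)

From HB Require Import structures.
From mathcomp Require Import all_boot all_order all_algebra.
From mathcomp Require Import classical_sets reals.
Set Implicit Arguments. Unset Strict Implicit. Unset Printing Implicit Defensive.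
Import Order.TTheory GRing.Theory Num.Theory.
Local Open Scope ring_scope.

Section Defs.
Variables (R : realType) (Omega : finType) (K : nat).

Notation tup := {ffun 'I_K -> Omega}.

Definition is_dist (T : finType) (f : T -> R) :=
  (forall t, 0 <= f t) /\ \sum_t f t = 1.

Definition support (x : tup) : {set Omega} := [set x i | i : 'I_K].

(* a token-level selection rule: a conditional distribution P(z | x_{1:K}) *)
Definition cond_dist (P : tup -> Omega -> R) := forall x, is_dist (P x).

Definition valid_rule (p : tup -> R) (q : Omega -> R) (P : tup -> Omega -> R) :=
  cond_dist P /\ forall z, \sum_x P x z * p x = q z.

Definition acc_prob (p : tup -> R) (P : tup -> Omega -> R) :=
  \sum_x p x * \sum_(z in support x) P x z.

Definition admissible (beta : Omega -> tup -> R) :=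
  forall x, (forall y, 0 <= beta y x <= 1) /\ \sum_y beta y x = 1 /\
            (forall y, y \notin support x -> beta y x = 0).

Definition objective (p : tup -> R) (q : Omega -> R) (beta : Omega -> tup -> R) :=
  \sum_y Num.min (q y) (\sum_x beta y x * p x).

Definition marginal (p : tup -> R) (beta : Omega -> tup -> R) (y : Omega) :=
  \sum_x beta y x * p x.

Definition spec_accept (pI q : Omega -> R) (y : Omega) : R :=
  if pI y == 0 then 1 else Num.min 1 (q y / pI y).

Definition spec_res (pI q : Omega -> R) (z : Omega) : R :=
  (q z - Num.min (pI z) (q z)) / (1 - \sum_w Num.min (pI w) (q w)).

Definition spec_kernel (pI q : Omega -> R) (y z : Omega) : R :=
  (if z == y then spec_accept pI q y else 0) +
  (1 - spec_accept pI q y) * spec_res pI q z.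

Definition two_step (p : tup -> R) (q : Omega -> R) (beta : Omega -> tup -> R)
  (x : tup) (z : Omega) : R :=
  \sum_y beta y x * spec_kernel (marginal p beta) q y z.

End Defs.

(* Any valid rule P induces admissible weights: keep P(y | x) on the drafts and move the
   remaining mass onto one draft. The probability of {Z = y, y \in S} is then bounded both by
   q y (validity) and by the marginal of these weights at y, so Pr(Z \in S) never exceeds the
   objective. Conversely, for admissible beta the two-step rule is valid, since speculative
   sampling turns the marginal p_I of Y into q, and it already accepts Y, which lies in S,
   with probability \sum_y min(p_I y, q y), the objective. The objective is continuous on the
   compact set of admissible families, hence has a maximiser; P* is the maximum, and the
   two-step rule built from any maximiser attains it. *)

From Pilot Require Import Defs.
From mathcomp Require Import all_boot all_order all_algebra.
From mathcomp Require Import classical_sets reals topology normedtype.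
From mathcomp Require Import function_spaces derive.
Import Order.TTheory GRing.Theory Num.Theory numFieldNormedType.Exports.

Set Implicit Arguments. Unset Strict Implicit. Unset Printing Implicit Defensive.
Local Open Scope ring_scope.
Local Open Scope classical_set_scope.

Lemma eq_of_ler_sum (R : numDomainType) (I : finType) (F G : I -> R) :
  (forall i, F i <= G i) -> \sum_i F i = \sum_i G i -> F =1 G.
Proof.
move=> FG sumFG i; apply/eqP; rewrite eq_sym -subr_eq0; apply/eqP.
have /psumr_eq0P gap0 : \sum_j (G j - F j) = 0 by rewrite sumrB sumFG subrr.
by apply: gap0 => // j _; rewrite subr_ge0.
Qed.

Section SpeculativeSampling.
Variables (R : realType) (Omega : finType) (pI q : Omega -> R).
Hypotheses (pI_dist : is_dist pI) (q_dist : is_dist q).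

Local Notation acc := (spec_accept pI q).
Local Notation res := (spec_res pI q).
Local Notation ker := (spec_kernel pI q).
Local Notation overlap := (\sum_w Num.min (pI w) (q w)).

Let pI_ge0 y : 0 <= pI y. Proof. by case: pI_dist. Qed.
Let q_ge0 y : 0 <= q y. Proof. by case: q_dist. Qed.

Lemma spec_accept_ge0 y : 0 <= acc y.
Proof. by rewrite /spec_accept; case: eqP => // _; rewrite le_min ler01 divr_ge0. Qed.

Lemma spec_accept_le1 y : acc y <= 1.
Proof. by rewrite /spec_accept; case: eqP => // _; rewrite ge_min lexx. Qed.

Lemma mulr_spec_accept y : pI y * acc y = Num.min (pI y) (q y).
Proof.
rewrite /spec_accept; case: eqP => [->|/eqP pI_neq0]; first by rewrite mul0r min_l.
have pI_gt0 : 0 < pI y by rewrite lt_def pI_neq0 pI_ge0.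
have [q_le|q_gt] := leP (q y) (pI y).
  have ratio_le1 : q y / pI y <= 1 by rewrite ler_pdivrMr ?mul1r.
  by rewrite (min_r ratio_le1) mulrC divfK.
have ratio_ge1 : 1 <= q y / pI y by rewrite ler_pdivlMr ?mul1r ?ltW.
by rewrite (min_l ratio_ge1) mulr1.
Qed.

Lemma overlap_le1 : overlap <= 1.
Proof. by case: q_dist => _ <-; apply: ler_sum => w _; rewrite ge_min lexx orbT. Qed.

Lemma overlap_eq1 : overlap = 1 -> pI =1 q.
Proof.
case: pI_dist q_dist => _ pI1 [_ q1] overlap1 y.
have min_le_pI w : Num.min (pI w) (q w) <= pI w by rewrite ge_min lexx.
have min_le_q w : Num.min (pI w) (q w) <= q w by rewrite ge_min lexx orbT.
have pI_min := eq_of_ler_sum min_le_pI (etrans overlap1 (esym pI1)).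
have q_min := eq_of_ler_sum min_le_q (etrans overlap1 (esym q1)).
by rewrite -pI_min q_min.
Qed.

Lemma spec_res_ge0 z : 0 <= res z.
Proof. by rewrite divr_ge0 // subr_ge0 ?ge_min ?lexx ?orbT // overlap_le1. Qed.

(* Also in the degenerate case overlap = 1, where [spec_res] divides by 0: then pI = q. *)
Lemma mul_overlap_spec_res z : (1 - overlap) * res z = q z - Num.min (pI z) (q z).
Proof.
have [overlap1|overlap_neq1] := eqVneq overlap 1.
  by rewrite overlap1 subrr mul0r overlap_eq1 // minxx subrr.
by rewrite mulrC /spec_res divfK // subr_eq0 eq_sym.
Qed.

Lemma spec_kernel_dist y : is_dist (ker y).
Proof.
split=> [z|].
  rewrite addr_ge0 //; first by case: eqP => // _; apply: spec_accept_ge0.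
  by rewrite mulr_ge0 ?spec_res_ge0 // subr_ge0 spec_accept_le1.
rewrite /spec_kernel big_split /= -big_mkcond big_pred1_eq -mulr_sumr.
have [overlap1|overlap_neq1] := eqVneq overlap 1.
  suff -> : acc y = 1 by rewrite subrr mul0r addr0.
  by rewrite /spec_accept overlap_eq1 //; case: eqP => // /eqP q_neq0; rewrite divff // min_l.
have -> : \sum_z res z = 1.
  rewrite /spec_res -mulr_suml sumrB; case: q_dist => _ ->.
  by rewrite divff // subr_eq0 eq_sym.
by rewrite mulr1 addrC subrK.
Qed.

Lemma spec_kernel_marginal z : \sum_y pI y * ker y z = q z.
Proof.
rewrite /spec_kernel; under eq_bigr do rewrite mulrDr mulrA.
rewrite big_split /= -mulr_suml.
rewrite (bigD1 z) //= eqxx big1 => [|y /negbTE y_neq]; last by rewrite eq_sym y_neq mulr0.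
under eq_bigr do rewrite mulrBr mulr1 mulr_spec_accept.
rewrite addr0 mulr_spec_accept sumrB; case: pI_dist => _ ->.
by rewrite mul_overlap_spec_res addrC subrK.
Qed.

Lemma spec_accept_le_kernel y : acc y <= ker y y.
Proof.
by rewrite /spec_kernel eqxx lerDl mulr_ge0 ?spec_res_ge0 // subr_ge0 spec_accept_le1.
Qed.

End SpeculativeSampling.

Section TwoStepRule.
Variables (R : realType) (Omega : finType) (K : nat).
Local Notation tup := {ffun 'I_K -> Omega}.
Variables (p : tup -> R) (q : Omega -> R) (beta : Omega -> tup -> R).
Hypotheses (p_dist : is_dist p) (q_dist : is_dist q) (beta_adm : admissible beta).

Local Notation pI := (marginal p beta).

Let p_ge0 x : 0 <= p x. Proof. by case: p_dist. Qed.
Let beta_ge0 y x : 0 <= beta y x. Proof. by have [/(_ y)/andP[]] := beta_adm x. Qed.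
Let beta_sum1 x : \sum_y beta y x = 1. Proof. by have [_ []] := beta_adm x. Qed.

Lemma marginal_dist : is_dist pI.
Proof.
split=> [y|]; first by apply: sumr_ge0 => x _; rewrite mulr_ge0.
rewrite /marginal exchange_big /=; case: p_dist => _ <-.
by apply: eq_bigr => x _; rewrite -mulr_suml beta_sum1 mul1r.
Qed.

Let ker_dist := spec_kernel_dist marginal_dist q_dist.

Lemma two_step_valid : valid_rule p q (two_step p q beta).
Proof.
split=> [x|z].
  split=> [z|]; first by apply: sumr_ge0 => y _; rewrite mulr_ge0 //; case: (ker_dist y).
  rewrite /two_step exchange_big /= -[RHS](beta_sum1 x); apply: eq_bigr => y _.
  by rewrite -mulr_sumr; case: (ker_dist y) => _ ->; rewrite mulr1.
rewrite -[RHS](spec_kernel_marginal marginal_dist q_dist z) /two_step.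
under eq_bigr do rewrite mulr_suml.
rewrite exchange_big /=; apply: eq_bigr => y _.
by rewrite /marginal mulr_suml; apply: eq_bigr => x _; rewrite mulrAC.
Qed.

Lemma objective_le_acc_prob_two_step : objective p q beta <= acc_prob p (two_step p q beta).
Proof.
have accept_le x y : beta y x * spec_accept pI q y <= two_step p q beta x y.
  rewrite /two_step (bigD1 y) //= -[leLHS]addr0 lerD ?ler_wpM2l //.
    exact: spec_accept_le_kernel.
  by apply: sumr_ge0 => w _; rewrite mulr_ge0 //; case: (ker_dist w).
have -> : objective p q beta = \sum_x p x * \sum_y beta y x * spec_accept pI q y.
  rewrite /objective; under eq_bigr do rewrite minC -(mulr_spec_accept marginal_dist q_dist).
  under [RHS]eq_bigr do rewrite mulr_sumr.
  rewrite exchange_big /=; apply: eq_bigr => y _.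
  by rewrite /marginal mulr_suml; apply: eq_bigr => x _; rewrite mulrCA mulrA.
apply: ler_sum => x _; apply: ler_wpM2l => //.
rewrite [leLHS](bigID (mem (Defs.support x))) /= [X in _ + X]big1 ?addr0.
  by apply: ler_sum => y _; apply: accept_le.
by move=> y y_notin; have [_ [_ ->]] := beta_adm x; rewrite ?mul0r.
Qed.

End TwoStepRule.

Lemma mem_support (Omega : finType) (K : nat) (x : {ffun 'I_K -> Omega}) i :
  x i \in Defs.support x.
Proof. exact: imset_f. Qed.

Section ValidRuleRelaxation.
Variables (R : realType) (Omega : finType) (K : nat).
Local Notation tup := {ffun 'I_K -> Omega}.
Variables (p : tup -> R) (q : Omega -> R) (P : tup -> Omega -> R) (i0 : 'I_K).
Hypotheses (p_dist : is_dist p) (P_valid : valid_rule p q P).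

Let accepted x := \sum_(z in Defs.support x) P x z.

Definition rule_weights (y : Omega) (x : tup) : R :=
  (if y \in Defs.support x then P x y else 0) + (if y == x i0 then 1 - accepted x else 0).

Let P_ge0 x z : 0 <= P x z. Proof. by case: P_valid => /(_ x) []. Qed.
Let P_sum1 x : \sum_z P x z = 1. Proof. by case: P_valid => /(_ x) []. Qed.

Let P_le_accepted x y : y \in Defs.support x -> P x y <= accepted x.
Proof. by move=> y_in; rewrite /accepted (bigD1 y) //= lerDl sumr_ge0. Qed.

Let P_le1 x y : P x y <= 1.
Proof. by rewrite -(P_sum1 x) (bigD1 y) //= lerDl sumr_ge0. Qed.

Let accepted_le1 x : accepted x <= 1.
Proof. by rewrite -(P_sum1 x) [leRHS](bigID (mem (Defs.support x))) /= lerDl sumr_ge0. Qed.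

Lemma admissible_rule_weights : admissible rule_weights.
Proof.
move=> x; split; last split.
- move=> y; rewrite /rule_weights; apply/andP; split.
    by rewrite addr_ge0 //; case: ifP; rewrite ?subr_ge0.
  have [->|_] := eqVneq y (x i0).
    by rewrite mem_support addrC -addrA gerDl addrC subr_le0 P_le_accepted ?mem_support.
  by rewrite addr0; case: ifP.
- rewrite /rule_weights big_split /= -!big_mkcond big_pred1_eq /=.
  by rewrite addrC subrK.
- move=> y y_notin; rewrite /rule_weights (negbTE y_notin) add0r.
  by case: eqP => // y_eq; move: y_notin; rewrite y_eq mem_support.
Qed.

Lemma acc_prob_le_objective_rule_weights : acc_prob p P <= objective p q rule_weights.
Proof.
have -> : acc_prob p P = \sum_y \sum_x (if y \in Defs.support x then P x y else 0) * p x.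
  rewrite /acc_prob exchange_big /=; apply: eq_bigr => x _.
  rewrite mulrC mulr_suml big_mkcond /=; apply: eq_bigr => y _.
  by case: ifP; rewrite ?mul0r.
have p_ge0 x : 0 <= p x by case: p_dist.
apply: ler_sum => y _; rewrite le_min; apply/andP; split.
  by case: P_valid => _ <-; apply: ler_sum => x _; rewrite ler_wpM2r //; case: ifP.
apply: ler_sum => x _; rewrite ler_wpM2r // lerDl.
by case: ifP => // _; rewrite subr_ge0.
Qed.

End ValidRuleRelaxation.

Lemma continuous_sumr (R : realType) (T : topologicalType) (J : finType)
    (F : J -> T -> R) :
  (forall j, continuous (F j)) -> continuous (fun t => \sum_j F j t).
Proof.
move=> F_cont.
exact: (@continuous_big _ _ +%R 0 xpredT add_continuous _ _ F (fun j _ => F_cont j)).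
Qed.

Section ObjectiveMaximum.
Variables (R : realType) (Omega : finType) (K : nat).
Local Notation tup := {ffun 'I_K -> Omega}.
Local Notation weights := {ptws Omega * tup -> R}.
Variables (p : tup -> R) (q : Omega -> R).

Let curry (f : weights) : Omega -> tup -> R := fun y x => f (y, x).

Let continuous_eval yx : continuous (fun f : weights => f yx).
Proof. exact: proj_continuous. Qed.

Lemma admissibleE (beta : Omega -> tup -> R) : admissible beta <->
  (forall y x, 0 <= beta y x <= (y \in Defs.support x)%:R) /\
  (forall x, \sum_y beta y x = 1).
Proof.
split=> [beta_adm|[beta_le beta_sum1] x].
  split=> [y x|x]; last by have [_ []] := beta_adm x.
  have [beta01 [_ beta_supp]] := beta_adm x.
  by have [_|/beta_supp ->] := boolP (y \in _); rewrite ?lexx ?beta01.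
split; [move=> y | split=> // y].
- by have /andP[-> /le_trans->] := beta_le y x; rewrite // lern1 leq_b1.
- move=> /negbTE y_notin; apply/eqP; rewrite eq_le andbC.
  by have := beta_le y x; rewrite y_notin.
Qed.

Lemma compact_admissible : compact [set f : weights | admissible (curry f)].
Proof.
have -> : [set f : weights | admissible (curry f)] =
    [set f : weights | forall yx, `[0, (yx.1 \in Defs.support yx.2)%:R]%classic (f yx)] `&`
    \bigcap_(x in setT) ((fun f : weights => \sum_y f (y, x)) @^-1` [set 1]).
  apply/seteqP; split=> f; rewrite /= admissibleE.
    case=> f_le f_sum1; split=> [[y x]|x _]; last exact: f_sum1.
    by rewrite /= in_itv /= f_le.
  case=> f_itv f_sum1; split=> [y x|x]; last exact: f_sum1.
  by have := f_itv (y, x); rewrite /= in_itv.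
apply: compact_closedI.
  exact: (@tychonoff _ (fun=> R) _
    (fun yx => @segment_compact R 0 (yx.1 \in Defs.support yx.2)%:R)).
apply: closed_bigI => x _; apply: preimage_closed; last exact: closed_eq.
by move=> f _; apply: continuous_sumr => y; apply: continuous_eval.
Qed.

Lemma continuous_objective : continuous (fun f : weights => objective p q (curry f)).
Proof.
apply: continuous_sumr => y; apply: min_fun_continuous; first exact: cst_continuous.
apply: continuous_sumr => x f; apply: continuousM; first exact: continuous_eval.
exact: cst_continuous.
Qed.

Lemma objective_max_exists (i0 : 'I_K) : exists2 beta, admissible beta &
  forall beta', admissible beta' -> objective p q beta' <= objective p q beta.
Proof.
have point_mass_adm : admissible (fun (y : Omega) (x : tup) => if y == x i0 then 1 else 0 : R).
  apply/admissibleE; split=> [y x|x]; last by rewrite -big_mkcond big_pred1_eq.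
  by case: eqP => [->|_]; rewrite ?mem_support ?ler01 ?lexx ?ler0n.
have [|f f_adm f_max] := compact_EVT_max _ compact_admissible
  (continuous_subspaceT continuous_objective).
  by exists (fun yx : Omega * tup => if yx.1 == yx.2 i0 then 1 else 0 : R).
exists (curry f); first by rewrite inE in f_adm.
by move=> beta' beta'_adm; apply: (f_max (fun yx => beta' yx.1 yx.2)); rewrite inE.
Qed.

End ObjectiveMaximum.

Section Optimality.
Variables (R : realType) (Omega : finType) (K : nat).
Local Notation tup := {ffun 'I_K -> Omega}.
Variables (p : tup -> R) (q : Omega -> R) (i0 : 'I_K) (beta : Omega -> tup -> R).
Hypotheses (p_dist : is_dist p) (q_dist : is_dist q) (beta_adm : admissible beta).
Hypothesis beta_max :
  forall beta', admissible beta' -> objective p q beta' <= objective p q beta.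

Local Notation acc_probs :=
  [set a : R | exists P : tup -> Omega -> R, valid_rule p q P /\ acc_prob p P = a].

Lemma acc_prob_le_max_objective P : valid_rule p q P -> acc_prob p P <= objective p q beta.
Proof.
move=> P_valid; apply: le_trans (acc_prob_le_objective_rule_weights i0 p_dist P_valid) _.
by apply: beta_max; apply: admissible_rule_weights P_valid.
Qed.

Lemma sup_acc_prob : sup acc_probs = objective p q beta.
Proof.
have two_step_in : acc_probs (acc_prob p (two_step p q beta)).
  by exists (two_step p q beta); split=> //; apply: two_step_valid.
have acc_probs_ub : ubound acc_probs (objective p q beta).
  by move=> _ [P [P_valid <-]]; apply: acc_prob_le_max_objective.
have acc_probs_sup : has_sup acc_probs.
  by split; [exists (acc_prob p (two_step p q beta)) | exists (objective p q beta)].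
apply/eqP; rewrite eq_le ge_sup //=; last by case: acc_probs_sup.
apply: le_trans (objective_le_acc_prob_two_step p_dist q_dist beta_adm) _.
exact: sup_upper_bound.
Qed.

End Optimality.

Theorem theorem4 (R : realType) (Omega : finType) (K : nat)
  (q : Omega -> R) (p : {ffun 'I_K -> Omega} -> R) :
  (0 < K)%N -> is_dist q -> is_dist p ->
  let Pstar := sup [set a : R | exists P : {ffun 'I_K -> Omega} -> Omega -> R,
                      valid_rule p q P /\ acc_prob p P = a] in
  (exists beta : Omega -> {ffun 'I_K -> Omega} -> R,
      admissible beta /\ objective p q beta = Pstar) /\
  (forall beta : Omega -> {ffun 'I_K -> Omega} -> R,
      admissible beta -> objective p q beta <= Pstar) /\
  (forall beta : Omega -> {ffun 'I_K -> Omega} -> R,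
      admissible beta -> objective p q beta = Pstar ->
      valid_rule p q (two_step p q beta) /\ acc_prob p (two_step p q beta) = Pstar).
Proof.
move=> K_gt0 q_dist p_dist Pstar.
pose i0 : 'I_K := Ordinal K_gt0.
have [bmax bmax_adm bmax_max] := objective_max_exists p q i0.
have Pstar_eq : Pstar = objective p q bmax.
  by rewrite /Pstar (sup_acc_prob i0 p_dist q_dist bmax_adm bmax_max).
split; first by exists bmax.
split=> [beta beta_adm|beta beta_adm beta_opt]; first by rewrite Pstar_eq bmax_max.
have two_step_ok := two_step_valid p_dist q_dist beta_adm.
split=> //; apply/eqP; rewrite eq_le {1}Pstar_eq.
rewrite (acc_prob_le_max_objective i0 p_dist bmax_max two_step_ok) -beta_opt.
exact: objective_le_acc_prob_two_step.
Qed.
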